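(* For every $\pi\in S_n$, $\mathrm{inv}(\pi)\equiv\mathrm{inv}(dp(\pi))\pmod 2$.
   Context: $S_n$ is the symmetric group on $[n]$, $\mathrm{inv}(\pi)=\#\{(i,j):i<j,\pi_i>\pi_j\}$ (with $\mathrm{inv}$ of the empty word equal to $0$). For a word $w$ of distinct positive integers $a_1<\dots<a_m$, its reduction is obtained by replacing each $a_j$ by $j$. The derangement part $dp(\pi)$ is the reduction of the subword of $\pi$ consisting of the letters $\pi_i$ with $\pi_i\ne i$. *)

From mathcomp Require Import all_boot all_order all_fingroup.
Set Implicit Arguments. Unset Strict Implicit. Unset Printing Implicit Defensive.

Definition inv_word (w : seq nat) : nat :=
  \sum_(i < size w) \sum_(j < size w | i < j) (nth 0 w j < nth 0 w i).

(* reduction of a word of distinct letters a_1 < ... < a_m: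
   each letter a_j is replaced by j, i.e. by the number of letters <= it *)
Definition reduction (w : seq nat) : seq nat :=
  [seq count (fun b => b <= a) w | a <- w].

(* one-line notation of pi in S_n, written on [n] = {1,..,n}:
   position i+1 carries the letter (pi i)+1 *)
Definition oneline n (pi : 'S_n) : seq nat :=
  [seq (pi i).+1 | i <- enum 'I_n].

Definition inv_perm n (pi : 'S_n) : nat := inv_word (oneline pi).

Definition dp n (pi : 'S_n) : seq nat :=
  reduction [seq (pi i).+1 | i <- enum 'I_n & pi i != i].

From mathcomp Require Import all_boot all_order all_fingroup.
Set Implicit Arguments. Unset Strict Implicit. Unset Printing Implicit Defensive.

(* Since pi maps {i | i < f} onto {i | pi i < f}, a fixed point f has as many
   inversions (i, f) on its left as inversions (f, j) on its right, so the
   inversions touching a fixed point (never two at once) are even in number.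
   The others are the inversions of the derangement subword, and reduction
   preserves inversions. *)

Lemma inv_word_cons (x : nat) (s : seq nat) :
  inv_word (x :: s) = count (fun y => y < x) s + inv_word s.
Proof.
rewrite /inv_word big_ord_recl /=; congr (_ + _).
  rewrite big_mkcond big_ord_recl /= add0n -sum1_count [RHS]big_mkcond (big_nth 0) big_mkord.
  by apply: eq_big => // i _; rewrite add0n; case: ltnP.
apply: eq_bigr => i _; rewrite big_mkcond big_ord_recl /= add0n [RHS]big_mkcond.
by apply: eq_big.
Qed.

Lemma inv_word_map_sorted (T : eqType) (r : rel T) (g : T -> nat) (s : seq T) :
  irreflexive r -> transitive r -> sorted r s ->
  inv_word (map g s) = \sum_(x <- s) \sum_(y <- s) (r x y && (g y < g x)).
Proof.
move=> r_irr r_trans; elim: s => [|x s IHs] s_sorted; first by rewrite big_nil /inv_word big_ord0.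
have x_min : all (r x) s by apply: order_path_min s_sorted.
rewrite map_cons inv_word_cons IHs ?(path_sorted s_sorted) // big_cons; congr (_ + _).
  rewrite big_cons r_irr add0n count_map -sum1_count big_mkcond.
  by apply: eq_big_seq => y y_s; rewrite (allP x_min y y_s) /=; case: ltnP.
apply: eq_big_seq => y y_s; rewrite big_cons.
suff -> : r y x = false by [].
by apply: contraFF (r_irr y) => r_yx; apply: r_trans r_yx (allP x_min y y_s).
Qed.

Lemma inv_word_map_mono (f : nat -> nat) (w : seq nat) :
  {in w &, forall a b, (f a < f b) = (a < b)} -> inv_word (map f w) = inv_word w.
Proof.
elim: w => [|x s IHs] f_mono //=; rewrite !inv_word_cons IHs; last first.
  by apply: sub_in2 f_mono => y y_s; rewrite inE y_s orbT.
congr (_ + _); rewrite count_map; apply: eq_in_count => y y_s /=.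
by rewrite f_mono // ?mem_head // inE y_s orbT.
Qed.

Lemma count_leq_mono (w : seq nat) :
  {in w &, forall a b, (count (leq^~ a) w < count (leq^~ b) w) = (a < b)}.
Proof.
move=> a b _ b_w; case: (ltnP a b) => [a_lt_b | b_le_a].
  have b_counted : 0 < count_mem b w by rewrite -has_count has_pred1.
  have no_overlap : count (predI (leq^~ a) (pred1 b)) w = 0.
    rewrite -(count_pred0 w); apply: eq_count => c /=.
    by apply/negbTE/andP => -[c_le_a /eqP c_eq_b]; move: a_lt_b; rewrite -c_eq_b ltnNge c_le_a.
  have : count (leq^~ a) w + count_mem b w <= count (leq^~ b) w.
    rewrite -count_predUI no_overlap addn0; apply: sub_count => c /= /orP[c_le_a | /eqP ->] //.
    exact: leq_trans c_le_a (ltnW a_lt_b).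
  by apply: leq_trans; rewrite -addn1 leq_add2l.
apply/negbTE; rewrite -leqNgt; apply: sub_count => c /= c_le_b.
exact: leq_trans c_le_b b_le_a.
Qed.

Lemma inv_word_map_enum n (P : pred 'I_n) (g : 'I_n -> nat) :
  inv_word [seq g i | i <- enum 'I_n & P i] =
  \sum_(i | P i) \sum_(j | P j) ((i < j) && (g j < g i)).
Proof.
pose lt_ord := fun i j : 'I_n => i < j.
have lt_ord_trans : transitive lt_ord by move=> j i k; apply: ltn_trans.
have enum_sorted : sorted lt_ord (enum 'I_n).
  by rewrite -(@sorted_map _ _ val ltn) val_enum_ord iota_ltn_sorted.
rewrite (@inv_word_map_sorted _ lt_ord) //; first last.
- exact: (sorted_filter lt_ord_trans).
- by move=> i; rewrite /lt_ord ltnn.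
rewrite big_filter big_enum_cond /=; apply: eq_bigr => i _.
by rewrite big_filter big_enum_cond.
Qed.

Lemma sum_bool_split (T : finType) (b c : pred T) :
  \sum_i b i = \sum_i (b i && c i) + \sum_i (b i && ~~ c i).
Proof. by rewrite -big_split; apply: eq_bigr => i _; case: (b i); case: (c i). Qed.

Lemma perm_crossings n (pi : 'S_n) (k : nat) :
  \sum_(i : 'I_n) ((i < k) && (k <= pi i)) = \sum_(i : 'I_n) ((k <= i) && (pi i < k)).
Proof.
have card_below : \sum_(i : 'I_n) (pi i < k) = \sum_(i : 'I_n) (i < k).
  by rewrite [RHS](reindex_inj (@perm_inj _ pi)).
move: card_below; rewrite (sum_bool_split (fun i : 'I_n => pi i < k) (fun i : 'I_n => i < k)).
rewrite [RHS](sum_bool_split (fun i : 'I_n => i < k) (fun i => pi i < k)) /=.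
have -> : \sum_(i : 'I_n) ((pi i < k) && (i < k)) = \sum_(i : 'I_n) ((i < k) && (pi i < k)).
  by apply: eq_bigr => i _; rewrite andbC.
move/addnI => crossings.
transitivity (\sum_(i : 'I_n) ((i < k) && ~~ (pi i < k))).
  by apply: eq_bigr => i _; rewrite -leqNgt.
by rewrite -crossings; apply: eq_bigr => i _; rewrite -leqNgt andbC.
Qed.

Lemma inversions_at_fixed_point n (pi : 'S_n) (f : 'I_n) : pi f = f ->
  \sum_(i : 'I_n) ((i < f) && (pi f < pi i)) = \sum_(j : 'I_n) ((f < j) && (pi j < pi f)).
Proof.
move=> pi_f; rewrite pi_f.
have pi_neq_f i : i != f -> pi i != f by rewrite -{2}pi_f (inj_eq (@perm_inj _ pi)).
transitivity (\sum_(i : 'I_n) ((i < f) && (f <= pi i))).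
  apply: eq_bigr => i _; case: ltnP => //= i_lt_f.
  by rewrite ltn_neqAle eq_sym pi_neq_f // neq_ltn i_lt_f.
rewrite perm_crossings; apply: eq_bigr => j _.
case: (ltngtP f j) => //= /val_inj <-.
by rewrite pi_f ltnn.
Qed.

Lemma odd_sum_restrict (T : finType) (P : pred T) (e : T -> T -> nat) :
  (forall i j, ~~ P i -> ~~ P j -> e i j = 0) ->
  (forall j, ~~ P j -> \sum_i e i j = \sum_i e j i) ->
  odd (\sum_i \sum_j e i j) = odd (\sum_(i | P i) \sum_(j | P j) e i j).
Proof.
move=> e_out e_balanced.
set X := \sum_(i | P i) \sum_(j | ~~ P j) e i j.
have from_in : \sum_(i | P i) \sum_j e i j = \sum_(i | P i) \sum_(j | P j) e i j + X.
  by rewrite -big_split; apply: eq_bigr => i _; rewrite (bigID P).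
have from_out : \sum_(i | ~~ P i) \sum_j e i j = X.
  rewrite (eq_bigr _ (fun j Pj => esym (e_balanced j Pj))) exchange_big (bigID P) /=.
  rewrite [X in _ + X]big1 ?addn0 // => j Pj.
  by rewrite big1 // => i Pi; apply: e_out.
by rewrite (bigID P) /= from_in from_out -addnA addnn oddD odd_double addbF.
Qed.

Theorem mainTheorem6 (n : nat) (pi : 'S_n) :
  odd (inv_perm pi) = odd (inv_word (dp pi)).
Proof.
rewrite /inv_perm /oneline /dp /reduction inv_word_map_mono; last exact: count_leq_mono.
rewrite -{1}(filter_predT (enum 'I_n)) !inv_word_map_enum.
apply: odd_sum_restrict => [i j | j]; rewrite !negbK => /eqP pi_i.
  by move=> /eqP pi_j; rewrite pi_i pi_j ltnS; case: ltngtP.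
under eq_bigr do rewrite ltnS.
under [RHS]eq_bigr do rewrite ltnS.
exact: inversions_at_fixed_point.
Qed.
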